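(* Let $a,b\in\mathbb{H}$ with $b\in C_a$, and let $P\in\mathbb{H}[q_1,q_2]$ vanish at $(a,b)$. Let $P_{q_2}$ be the partial Cullen derivative of $P$ with respect to $q_2$. If the multiplicity $n$ of the zero $\mathbb{H}\times\{b\}$ of $P$ satisfies $n\ge2$, then ${\rm Res}(P,P_{q_2};q_2)\equiv0$.
   Context: $\mathbb{H}$ denotes the quaternions; for $a\in\mathbb{H}$, $C_a=\{q\in\mathbb{H}: qa=aq\}$. A slice regular polynomial in two quaternionic variables is a function $\mathbb{H}^2\to\mathbb{H}$ of the form $P(q_1,q_2)=\sum_{n=0}^{N}\sum_{m=0}^{M}q_1^nq_2^ma_{n,m}$ with $a_{n,m}\in\mathbb{H}$ (coefficients on the right); the set of these is $\mathbb{H}[q_1,q_2]$, and $\mathbb{H}[q]$ denotes one-variable polynomials $\sum q^na_n$. The $*$-product is $\big(\sum q_1^nq_2^ma_{n,m}\big)*\big(\sum q_1^nq_2^mb_{n,m}\big)=\sum_{n,m}q_1^nq_2^m\sum_{r\le n,s\le m}a_{r,s}b_{n-r,m-s}$; $(q_2-b)^{*n}$ is the $n$-fold $*$-power. The partial Cullen derivative is $P_{q_2}=\sum_{m\ge1}mq_1^{n}q_2^{m-1}a_{n,m}$. Multiplicity: if $P$ vanishes on $\mathbb{H}\times\{b\}$, its multiplicity there is $n\in\mathbb N$ such that $P=(q_2-b)^{*n}*S$ with $S\in\mathbb{H}[q_1,q_2]$ not vanishing identically on $\mathbb{H}\times\{b\}$. Regular resultant: $(\mathbb{H}[q],+,*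 )$ is an Ore domain with skew field of quotients $\mathcal L$; ${\rm Det}^*_N$ is the Dieudonné determinant of $N\times N$ matrices over $\mathcal L$ (the unique homomorphism $GL(N,\mathcal L)\to$ abelianization of $\mathcal L^\times$ sending ${\rm diag}(\lambda_i)$ to the class of $\lambda_1*\cdots*\lambda_N$, set to $0$ on singular matrices), whose value on matrices over $\mathbb{H}[q]$ is identified with a polynomial representative. Writing $P=\sum_{k=0}^rq_2^k*\tilde P_k(q_1)$, $Q=\sum_{k=0}^sq_2^k*\tilde Q_k(q_1)$ with $\tilde P_k,\tilde Q_k\in\mathbb{H}[q_1]$, ${\rm Res}(P,Q;q_2)={\rm Det}^*_{r+s}(B(q_1))$, where $B(q_1)$ is the $(r+s)\times(r+s)$ Sylvester matrix whose $j$-th column ($1\le j\le s$) has $\tilde P_0,\dots,\tilde P_r$ in rows $j,\dots,j+r$, whose $(s+j)$-th column ($1\le j\le r$) has $\tilde Q_0,\dots,\tilde Q_s$ in rows $j,\dots,j+s$, and zeros elsewhere. ''${\rm Res}\equiv0$'' means it is zero. *)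

From HB Require Import structures.
From mathcomp Require Import all_boot all_order all_algebra.
From mathcomp Require Import reals fraction.
From mathcomp Require Import ring.
Set Implicit Arguments. Unset Strict Implicit. Unset Printing Implicit Defensive.
Import Order.TTheory GRing.Theory Num.Theory.
Local Open Scope ring_scope.

Record quat (F : Type) := Quat { qr : F; qi : F; qj : F; qk : F }.
Arguments Quat {F}.

Section QuatRing.
Variable F : comNzRingType.

Definition quat_to (x : quat F) := (qr x, qi x, qj x, qk x).
Definition quat_of (t : F * F * F * F) := let: (a, b, c, d) := t in Quat a b c d.
Lemma quat_toK : cancel quat_to quat_of. Proof. by case. Qed.

HB.instance Definition _ := Equality.copy (quat F) (can_type quat_toK).
HB.instance Definition _ := Choice.copy (quat F) (can_type quat_toK).

Definition qzero : quat F := Quat 0 0 0 0.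
Definition qone : quat F := Quat 1 0 0 0.
Definition qopp (x : quat F) := Quat (- qr x) (- qi x) (- qj x) (- qk x).
Definition qadd (x y : quat F) :=
  Quat (qr x + qr y) (qi x + qi y) (qj x + qj y) (qk x + qk y).
(* Hamilton product: i^2 = j^2 = k^2 = ijk = -1 *)
Definition qmul (x y : quat F) :=
  Quat (qr x * qr y - qi x * qi y - qj x * qj y - qk x * qk y)
       (qr x * qi y + qi x * qr y + qj x * qk y - qk x * qj y)
       (qr x * qj y - qi x * qk y + qj x * qr y + qk x * qi y)
       (qr x * qk y + qi x * qj y - qj x * qi y + qk x * qr y).

Lemma qaddA : associative qadd.
Proof. by case=> ????[????][????]; rewrite /qadd /=; congr Quat; ring. Qed.
Lemma qaddC : commutative qadd.
Proof. by case=> ????[????]; rewrite /qadd /=; congr Quat; ring. Qed.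
Lemma qadd0 : left_id qzero qadd.
Proof. by case=> ????; rewrite /qadd /=; congr Quat; ring. Qed.
Lemma qaddN : left_inverse qzero qopp qadd.
Proof. by case=> ????; rewrite /qadd /=; congr Quat; ring. Qed.

HB.instance Definition _ := GRing.isZmodule.Build (quat F) qaddA qaddC qadd0 qaddN.

Lemma qmulA : associative qmul.
Proof. by case=> ????[????][????]; rewrite /qmul /=; congr Quat; ring. Qed.
Lemma qmul1 : left_id qone qmul.
Proof. by case=> ????; rewrite /qmul /=; congr Quat; ring. Qed.
Lemma qmulr1 : right_id qone qmul.
Proof. by case=> ????; rewrite /qmul /=; congr Quat; ring. Qed.
Lemma qmulDl : left_distributive qmul qadd.
Proof. by case=> ????[????][????]; rewrite /qmul /= /qadd /=; congr Quat; ring. Qed.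
Lemma qmulDr : right_distributive qmul qadd.
Proof. by case=> ????[????][????]; rewrite /qmul /= /qadd /=; congr Quat; ring. Qed.
Lemma qone_neq0 : qone != 0.
Proof. by apply/eqP => -[] /eqP; rewrite oner_eq0. Qed.

HB.instance Definition _ :=
  GRing.Zmodule_isNzRing.Build (quat F) qmulA qmul1 qmulr1 qmulDl qmulDr qone_neq0.
End QuatRing.

(* H[q] with the *-product is  {poly (quat R)}  (variable central).   *)
(* H[q1,q2] with the *-product is  {poly {poly (quat R)}} : the outer  *)
(* variable is q2, the inner one q1; so P`_m (a polynomial in q1) is  *)
(* the coefficient  \tilde P_m(q1)  in  P = sum_m q2^m * \tilde P_m.   *)
Section SliceReg.
Variable R : realType.
Local Notation H := (quat R).

(* P(x1,x2) = sum_{n,m} x1^n x2^m a_{n,m}, coefficients on the right *)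
Definition eval2 (P : {poly {poly H}}) (x1 x2 : H) : H :=
  \sum_(m < size P) \sum_(n < size P`_m) x1 ^+ n * x2 ^+ m * (P`_m)`_n.

Definition q2_minus (b : H) : {poly {poly H}} := 'X - (b%:P)%:P.

Definition cullen_q2 (P : {poly {poly H}}) : {poly {poly H}} := P^`().

(* Sylvester matrix B(q1) of P and Q with respect to q2 (0-based indices):
   r = deg_{q2} P, s = deg_{q2} Q, size r+s; column j < s carries
   P0..Pr in rows j..j+r, column s+j (j < r) carries Q0..Qs in rows j..j+s. *)
Definition sylvester (P Q : {poly {poly H}}) :
  'M[{poly H}]_((size P).-1 + (size Q).-1) :=
  \matrix_(i, j)
    (if (j < (size Q).-1)%N then
       (if (j <= i)%N then P`_(i - j) else 0)
     else (if (j - (size Q).-1 <= i)%N then Q`_(i - (j - (size Q).-1)) else 0)).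

(* The skew field of quotients L of H[q] (with the star-product) : since q is central, L is
   the quaternion algebra over the rational function field R(q),
   i.e. quat {fraction {poly R}}; H[q] embeds componentwise. *)
Definition Lfield := quat {fraction {poly R}}.

Definition toL (p : {poly H}) : Lfield :=
  Quat (tofrac (map_poly (@qr R) p)) (tofrac (map_poly (@qi R) p))
       (tofrac (map_poly (@qj R) p)) (tofrac (map_poly (@qk R) p)).

Definition invertible_over_L N (B : 'M[{poly H}]_N) : Prop :=
  exists C : 'M[Lfield]_N,
    map_mx toL B *m C = 1%:M /\ C *m map_mx toL B = 1%:M.

(* Res(P,Q;q2) = Det*_{r+s}(B(q1)); by definition the Dieudonne determinant
   is 0 exactly on singular matrices (on GL it takes values in the
   abelianization of L^x, which has no zero).  So "Res == 0" means: *)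
Definition res_vanishes (P Q : {poly {poly H}}) : Prop :=
  ~ invertible_over_L (sylvester P Q).

End SliceReg.

From HB Require Import structures.
From mathcomp Require Import all_boot all_order all_algebra.
From mathcomp Require Import reals fraction ring zify.
Set Implicit Arguments. Unset Strict Implicit. Unset Printing Implicit Defensive.
Import GRing.Theory.
Local Open Scope ring_scope.

(* Since n >= 2, the Leibniz rule shows that P and its Cullen derivative are
   both left multiples of q2 - b.  Multiplying the Sylvester matrix on the left
   by the row (1, b, b^2, ...) evaluates each of its columns, a coefficient
   list of q2^j P or q2^j P_q2, at q2 = b from the left, which gives 0.  The
   embedding of H[q] into L is a ring morphism (q is central), so this nonzero
   row stays in the left kernel over L and the Sylvester matrix is singular. *)

Section QuatMap.
Variables (F G : comNzRingType) (f : {rmorphism F -> G}).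

Definition quat_map (x : quat F) : quat G :=
  Quat (f (qr x)) (f (qi x)) (f (qj x)) (f (qk x)).

Lemma quat_map_is_zmod_morphism : zmod_morphism quat_map.
Proof. by case=> ????[????]; rewrite /quat_map /=; congr Quat; rewrite rmorphB. Qed.

Lemma quat_map_is_monoid_morphism : monoid_morphism quat_map.
Proof.
split=> [|[????][????]]; rewrite /quat_map /=.
  by congr Quat; rewrite ?rmorph1 ?rmorph0.
by congr Quat; rewrite !(rmorphB, rmorphD, rmorphM).
Qed.

HB.instance Definition _ :=
  GRing.isZmodMorphism.Build _ _ quat_map quat_map_is_zmod_morphism.
HB.instance Definition _ :=
  GRing.isMonoidMorphism.Build _ _ quat_map quat_map_is_monoid_morphism.
End QuatMap.

Section PolyQuat.
Variable F : comNzRingType.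

Fact qr_is_zmod_morphism : zmod_morphism (@qr F). Proof. by []. Qed.
Fact qi_is_zmod_morphism : zmod_morphism (@qi F). Proof. by []. Qed.
Fact qj_is_zmod_morphism : zmod_morphism (@qj F). Proof. by []. Qed.
Fact qk_is_zmod_morphism : zmod_morphism (@qk F). Proof. by []. Qed.
HB.instance Definition _ := GRing.isZmodMorphism.Build _ _ (@qr F) qr_is_zmod_morphism.
HB.instance Definition _ := GRing.isZmodMorphism.Build _ _ (@qi F) qi_is_zmod_morphism.
HB.instance Definition _ := GRing.isZmodMorphism.Build _ _ (@qj F) qj_is_zmod_morphism.
HB.instance Definition _ := GRing.isZmodMorphism.Build _ _ (@qk F) qk_is_zmod_morphism.

Definition poly_quat (p : {poly quat F}) : quat {poly F} :=
  Quat (map_poly (@qr F) p) (map_poly (@qi F) p) (map_poly (@qj F) p) (map_poly (@qk F) p).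

Lemma poly_quat_is_zmod_morphism : zmod_morphism poly_quat.
Proof. by move=> p q; rewrite /poly_quat !raddfB. Qed.

Lemma poly_quat_is_monoid_morphism : monoid_morphism poly_quat.
Proof.
split=> [|p q].
  by rewrite /poly_quat -polyC1 !map_polyC /= polyC1 polyC0.
rewrite /poly_quat [RHS]/GRing.mul /= /qmul /=; congr Quat; apply/polyP=> k;
  rewrite coef_map /= !(coefB, coefD) !coefM raddf_sum;
  repeat (rewrite -sumrB || rewrite -big_split);
  by apply: eq_bigr => j _; rewrite !coef_map /=; ring.
Qed.

HB.instance Definition _ :=
  GRing.isZmodMorphism.Build _ _ poly_quat poly_quat_is_zmod_morphism.
HB.instance Definition _ :=
  GRing.isMonoidMorphism.Build _ _ poly_quat poly_quat_is_monoid_morphism.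
End PolyQuat.

HB.instance Definition _ (R : realType) :=
  GRing.RMorphism.copy (@toL R) (quat_map (@tofrac _) \o @poly_quat R).

Section LeftRoot.
Variables (A : nzRingType) (c : A).

Lemma sum_powers_coef_XsubC_mul (F : {poly A}) N : (size F < N)%N ->
  \sum_(i < N) c ^+ i * (('X - c%:P) * F)`_i = 0.
Proof.
(* The coefficients of (X - c) F are F_(i-1) - c F_i: the sum telescopes. *)
case: N => [//|N] ltFN.
under eq_bigr => i _ do rewrite mulrBl coefB coefCM mulrBr.
rewrite sumrB big_ord_recl big_ord_recr /= coefXM /= mulr0 add0r.
rewrite [F`_N]nth_default // !mulr0 addr0; apply/eqP; rewrite subr_eq0; apply/eqP.
by apply: eq_bigr => i _; rewrite coefXM /= mulrA -exprSr.
Qed.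

Lemma sum_powers_coef_XnM_XsubC_mul (F : {poly A}) N j :
  ((size (('X - c%:P) * F)%R).-1 + j < N)%N ->
  \sum_(i < N) c ^+ i * ('X^j * (('X - c%:P) * F))`_i = 0.
Proof.
have [-> _|nzF] := eqVneq F 0.
  by apply: big1 => i _; rewrite !mulr0 coef0 mulr0.
rewrite mulrA -commr_polyXn -mulrA size_monicM ?monicXsubC // size_XsubC => ltN.
by apply: sum_powers_coef_XsubC_mul; rewrite -commr_polyXn size_mulXn //; lia.
Qed.

Lemma deriv_XsubC_sqr_mul (T : {poly A}) :
  (('X - c%:P) ^+ 2 * T)^`() = ('X - c%:P) * (T + (('X - c%:P) * T)^`()).
Proof. by rewrite -mulrA derivM derivXsubC mul1r mulrDr. Qed.

End LeftRoot.

Lemma mulmx_rinv_eq0 (K : pzRingType) N (B C : 'M[K]_N) (u : 'rV_N) :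
  B *m C = 1%:M -> u *m B = 0 -> u = 0.
Proof. by move=> BC uB; rewrite -[u]mulmx1 -BC mulmxA uB mul0mx. Qed.

Section Sylvester.
Variable R : realType.
Local Notation H := (quat R).
Implicit Types P Q : {poly {poly H}}.

Lemma sylvesterE P Q i j : sylvester P Q i j =
  if (j < (size Q).-1)%N then ('X^j * P)`_i else ('X^(j - (size Q).-1) * Q)`_i.
Proof. by rewrite mxE !coefXnM; case: ifP => _; rewrite ltnNge; case: leqP. Qed.

Lemma powers_mul_sylvester_XsubC (c : {poly H}) F G :
  \row_i c ^+ i *m sylvester (('X - c%:P) * F) (('X - c%:P) * G) = 0.
Proof.
apply/rowP=> j; rewrite !mxE; under eq_bigr do rewrite sylvesterE mxE.
case: ltnP => ltjs; apply: sum_powers_coef_XnM_XsubC_mul.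
  by rewrite ltn_add2l.
by rewrite subnKC.
Qed.

Lemma res_vanishes_XsubC_mul (c : {poly H}) F G : F != 0 ->
  res_vanishes (('X - c%:P) * F) (('X - c%:P) * G).
Proof.
move=> nzF [C [BC _]]; set N := (_ + _)%N in C BC.
have N_gt0 : (0 < N)%N.
  rewrite /N size_monicM ?monicXsubC // size_XsubC add2n.
  by rewrite ltn_addr // lt0n size_poly_eq0.
have := mulmx_rinv_eq0 (u := map_mx (@toL R) (\row_(i < N) c ^+ i)) BC.
rewrite -map_mxM powers_mul_sylvester_XsubC map_mx0.
move=> /(_ erefl) /matrixP /(_ 0 (Ordinal N_gt0)).
by rewrite !mxE expr0 rmorph1 => /eqP; rewrite oner_eq0.
Qed.

End Sylvester.

Theorem proposition4p12 (R : realType) (a b : quat R)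
  (P : {poly {poly quat R}}) :
  b * a = a * b ->
  eval2 P a b = 0 ->
  forall (n : nat) (S : {poly {poly quat R}}),
    P = q2_minus b ^+ n * S ->
    ~ (forall x : quat R, eval2 S x b = 0) ->
    (2 <= n)%N ->
    res_vanishes P (cullen_q2 P).
Proof.
move=> _ _ n S -> S_nz /subnKC <-.
have nzS : S != 0.
  by apply/eqP => S0; apply: S_nz => x; rewrite S0 /eval2 size_poly0 big_ord0.
rewrite /cullen_q2 /q2_minus exprD -mulrA deriv_XsubC_sqr_mul.
rewrite expr2 -mulrA; apply: res_vanishes_XsubC_mul.
have lregD : GRing.lreg ('X - (b%:P)%:P : {poly {poly quat R}}).
  exact/monic_lreg/monicXsubC.
by rewrite (mulrI_eq0 _ lregD) (mulrI_eq0 _ (lregX lregD)).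
Qed.
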